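(* Let $(X,\mathsf{d}_X)$ be a compact metric space and $\mathfrak{A}=\bigoplus_{k=0}^n M_{m_k}(\mathbb{C})$ ($n\in\mathbb{N}$, $m_k\ge1$). Let $\|\cdot\|_{\mathsf{n}}$ be a norm on $\mathfrak{A}$ (over $\mathbb{R}$ or $\mathbb{C}$) with $M,N>0$ such that $M\|\cdot\|_{\mathsf{n}}\le\|\cdot\|_{\mathfrak{A}}\le N\|\cdot\|_{\mathsf{n}}$. Let $v=(v_0,\dots,v_n)$ with $v_k\in[0,1]$, $\sum_kv_k=1$, and let $\mathsf{tr}^{\mathfrak{A}}_v$ be the state $(a^k)_k\mapsto\sum_{k=0}^n\frac{v_k}{m_k}\mathrm{Tr}(a^k)$. Then $\Delta:=\Delta^{\mathfrak{A}}_{\mathsf{tr}^{\mathfrak{A}}_v}:(X,\mathsf{d}_X)\to(\mathscr{S}(C(X,\mathfrak{A})),\mathrm{mk}_{\mathsf{L}^{(\mathsf{n}),q}_{\mathsf{d}_X}})$ is bi-Lipschitz; specifically, for all $x,y\in X$, writing $D=\mathrm{diam}(X,\mathsf{d}_X)$ and $m_q(x,y)=\mathrm{mk}_{\mathsf{L}^{(\mathsf{n}),q}_{\mathsf{d}_X}}(\Delta(x),\Delta(y))$: (1) if $q=C(X)$: $M\mathsf{d}_X(x,y)\le m_q(x,y)\le N\mathsf{d}_X(x,y)$; (2) if $q=\mathbb{C}$: (a) if $MD\le1$, $M\mathsf{d}_X(x,y)\le m_q(x,y)\le N\mathsf{d}_X(x,y)$; (b) if $MD>1$, $\frac1D\mathsf{d}_X(x,y)\le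 m_q(x,y)\le N\mathsf{d}_X(x,y)$; (3) if $q=\mu$ for a state $\mu$ of $C(X,\mathfrak{A})$: (a) if $2MD\le1$, $M\mathsf{d}_X(x,y)\le m_q(x,y)\le N\mathsf{d}_X(x,y)$; (b) if $2MD>1$, $\frac1{2D}\mathsf{d}_X(x,y)\le m_q(x,y)\le N\mathsf{d}_X(x,y)$.
   Context: For a state $\phi$ of $\mathfrak{A}$, $\Delta^{\mathfrak{A}}_\phi(x)$ is the state $a\mapsto\phi(a(x))$ of $C(X,\mathfrak{A})$ (continuous $\mathfrak{A}$-valued functions, supremum norm). $C(X,\mathbb{C}1_{\mathfrak{A}})$: $\mathbb{C}1_{\mathfrak{A}}$-valued functions. $l^{(\mathsf{n})}_{\mathsf{d}_X}(a)=\sup_{x\ne y}\|a(x)-a(y)\|_{\mathsf{n}}/\mathsf{d}_X(x,y)$; $\mathsf{L}^{(\mathsf{n}),C(X)}_{\mathsf{d}_X}(a)=\max\{l^{(\mathsf{n})}_{\mathsf{d}_X}(a),\inf_{b\in C(X,\mathbb{C}1_{\mathfrak{A}})}\|a-b\|\}$, $\mathsf{L}^{(\mathsf{n}),\mathbb{C}}_{\mathsf{d}_X}(a)=\max\{l^{(\mathsf{n})}_{\mathsf{d}_X}(a),\inf_{\lambda\in\mathbb{C}}\|a-\lambda1\|\}$, $\mathsf{L}^{(\mathsf{n}),\mu}_{\mathsf{d}_X}(a)=\max\{l^{(\mathsf{n})}_{\mathsf{d}_X}(a),\|a-\mu(a)1\|\}$. $\mathrm{mk}_{\mathsf{L}}(\varphi,\psi)=\sup\{|\varphi(a)-\psi(a)|:a=a^*,\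 \mathsf{L}(a)\le1\}$. $\mathrm{diam}(X,\mathsf{d}_X)=\sup_{x,y}\mathsf{d}_X(x,y)$. *)

From HB Require Import structures.
From mathcomp Require Import all_boot all_order all_algebra.
From mathcomp Require Import all_classical all_reals ereal.
From mathcomp Require Import complex.
Set Implicit Arguments. Unset Strict Implicit. Unset Printing Implicit Defensive.
Import Order.TTheory GRing.Theory Num.Theory.
Local Open Scope ring_scope.
Local Open Scope classical_set_scope.

Section Defs.
Variable R : realType.
Local Notation C := R[i].

Definition cabs (z : C) : R :=
  Num.sqrt (complex.Re z ^+ 2 + complex.Im z ^+ 2).
Definition rC (r : R) : C := Complex r 0.
Definition vnorm k (u : 'cV[C]_k) : R := Num.sqrt (\sum_i cabs (u i 0) ^+ 2).
Definition opnorm k (A : 'M[C]_k) : R :=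
  sup [set r | exists u : 'cV[C]_k, vnorm u <= 1 /\ r = vnorm (A *m u)].

Section Alg.
Variables (n : nat) (m : 'I_n.+1 -> nat).
Definition alg := forall k : 'I_n.+1, 'M[C]_(m k).
Definition alg_zero : alg := fun k => 0.
Definition alg_one : alg := fun k => 1%:M.
Definition alg_add (a b : alg) : alg := fun k => a k + b k.
Definition alg_sub (a b : alg) : alg := fun k => a k - b k.
Definition alg_mul (a b : alg) : alg := fun k => a k *m b k.
Definition alg_scale (c : C) (a : alg) : alg := fun k => c *: a k.
Definition alg_adj (a : alg) : alg := fun k => (map_mx conjc (a k))^T.
(* the C*-norm of A: maximum of the operator norms of the blocks *)
Definition alg_norm (a : alg) : R := \big[Num.max/0]_k opnorm (a k).
Definition trv (v : 'I_n.+1 -> R) (a : alg) : C :=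
  \sum_k rC (v k / (m k)%:R) * \tr (a k).
(* nn is a norm on A viewed as a real vector space (this covers norms over
   R as well as norms over C) *)
Definition is_alg_norm (nn : alg -> R) : Prop :=
  [/\ forall a, 0 <= nn a,
      forall a, nn a = 0 -> a = alg_zero,
      forall (r : R) a, nn (alg_scale (rC r) a) = `|r| * nn a &
      forall a b, nn (alg_add a b) <= nn a + nn b].
End Alg.

Section Metric.
Variables (X : Type) (d : X -> X -> R).
Definition is_metric : Prop :=
  [/\ forall x y, 0 <= d x y,
      forall x y, d x y = 0 <-> x = y,
      forall x y, d x y = d y x &
      forall x y z, d x z <= d x y + d y z].
Definition metric_open (U : set X) : Prop :=
  forall x, U x -> exists2 r : R, 0 < r & forall y, d x y < r -> U y.
Definition metric_compact : Prop :=
  forall (I : Type) (U : I -> set X),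
    (forall i, metric_open (U i)) -> (forall x, exists i, U i x) ->
    exists (k : nat) (f : 'I_k -> I), forall x, exists j, U (f j) x.
Definition diam : R := sup [set r | exists x y, r = d x y].

Variables (n : nat) (m : 'I_n.+1 -> nat).
Local Notation A := (alg m).
Definition cont (a : X -> A) : Prop :=
  forall x (e : R), 0 < e -> exists2 del : R, 0 < del &
    forall y, d x y < del -> alg_norm (alg_sub (a x) (a y)) < e.
Definition supnorm (a : X -> A) : \bar R :=
  ereal_sup [set r | exists x, r = (alg_norm (a x))%:E].
Definition lipc (nn : A -> R) (a : X -> A) : \bar R :=
  ereal_sup [set r | exists x y, x <> y /\
                     r = (nn (alg_sub (a x) (a y)) / d x y)%:E].
Definition L_CX (nn : A -> R) (a : X -> A) : \bar R :=
  Order.max (lipc nn a)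
    (ereal_inf [set r | exists b : X -> A,
        [/\ cont b, (forall x, exists l : C, b x = alg_scale l (alg_one m)) &
            r = supnorm (fun x => alg_sub (a x) (b x))]]).
Definition L_C (nn : A -> R) (a : X -> A) : \bar R :=
  Order.max (lipc nn a)
    (ereal_inf [set r | exists l : C,
        r = supnorm (fun x => alg_sub (a x) (alg_scale l (alg_one m)))]).
Definition L_mu (mu : (X -> A) -> C) (nn : A -> R) (a : X -> A) : \bar R :=
  Order.max (lipc nn a)
    (supnorm (fun x => alg_sub (a x) (alg_scale (mu a) (alg_one m)))).

(* states of C(X,A): positive linear functionals with mu(1) = 1
   (only their values on continuous functions matter) *)
Definition is_state (mu : (X -> A) -> C) : Prop :=
  [/\ forall a b, cont a -> cont b ->
        mu (fun x => alg_add (a x) (b x)) = mu a + mu b,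
      forall (c : C) a, cont a -> mu (fun x => alg_scale c (a x)) = c * mu a,
      forall a, cont a -> 0 <= mu (fun x => alg_mul (alg_adj (a x)) (a x)) &
      mu (fun _ => alg_one m) = 1].

Definition mk (L : (X -> A) -> \bar R) (phi psi : (X -> A) -> C) : \bar R :=
  ereal_sup [set r | exists a : X -> A,
     [/\ cont a, (forall x, alg_adj (a x) = a x), (L a <= 1)%E &
         r = (cabs (phi a - psi a))%:E]].

Definition Delta (phi : A -> C) (x : X) : (X -> A) -> C := fun a => phi (a x).
End Metric.
End Defs.

From HB Require Import structures.
From mathcomp Require Import all_boot all_order all_algebra.
From mathcomp Require Import all_classical all_reals ereal.
From mathcomp Require Import complex.
From mathcomp Require Import lra.
Set Implicit Arguments. Unset Strict Implicit. Unset Printing Implicit Defensive.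
Import Order.TTheory GRing.Theory Num.Theory.
Local Open Scope ring_scope.
Local Open Scope complex_scope.

(* The tracial state is a unital contraction, so for a self-adjoint a with
   L(a) <= 1 we get |tr(a x) - tr(a y)| <= ||a x - a y|| <= N ||a x - a y||_n
   <= N d(x, y).  For the lower bound, test against a = c d(x, .) 1 with
   c >= 0: since ||1||_n <= 1/M its Lipschitz seminorm is at most c/M, the
   difference of its traces at x and y is c d(x, y), and its distance to the
   scalar functions, to the constants, or to mu(a) 1 is at most c diam(X)
   (for a state mu, positivity puts mu(a) in [0, c diam(X)]).  Hence L(a) <= 1
   as soon as c <= M and c diam(X) <= 1, and the choices c = M, 1/diam(X) and
   1/(2 diam(X)) give the three cases. *)

Lemma sum_sqr_le_sqr_sum (R : numDomainType) (I : finType) (f : I -> R) :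
  (forall i, 0 <= f i) -> \sum_i f i ^+ 2 <= (\sum_i f i) ^+ 2.
Proof.
move=> f_ge0; rewrite expr2 mulr_suml; apply: ler_sum => i _.
rewrite expr2 ler_wpM2l // (bigD1 i) //= lerDl.
exact: sumr_ge0.
Qed.

Lemma dist_sqrtr_le (R : rcfType) (u w : R) : 0 <= u -> 0 <= w ->
  `|Num.sqrt u - Num.sqrt w| <= Num.sqrt `|u - w|.
Proof.
wlog wu : u w / w <= u.
  move=> hwlog u_ge0 w_ge0; have [wu|/ltW uw] := leP w u; first exact: hwlog.
  by rewrite distrC [`|u - w|]distrC; apply: hwlog.
move=> u_ge0 w_ge0; rewrite !ger0_norm ?subr_ge0 ?ler_wsqrtr // lerBlDr.
rewrite -(ger0_norm (addr_ge0 (sqrtr_ge0 (u - w)) (sqrtr_ge0 w))).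
rewrite -sqrtr_sqr ler_sqrt ?sqr_ge0 // sqrrD !sqr_sqrtr ?subr_ge0 //.
by rewrite addrAC subrK lerDl mulrn_wge0 // mulr_ge0 ?sqrtr_ge0.
Qed.

Section ComplexModulus.
Variable R : realType.
Implicit Types (z w : R[i]) (r s : R).

Lemma rCE r : rC r = r%:C.
Proof. by []. Qed.

Lemma cabsE z : (cabs z)%:C = `|z|.
Proof. by rewrite normc_def. Qed.

Lemma cabs_ge0 z : 0 <= cabs z.
Proof. exact: sqrtr_ge0. Qed.

Lemma cabs_rC r : cabs (rC r) = `|r|.
Proof. by rewrite /cabs /= expr0n addr0 sqrtr_sqr. Qed.

Lemma rCB r s : rC r - rC s = rC (r - s).
Proof. by rewrite !rCE -rmorphB. Qed.

Lemma cabs_rCB r s : cabs (rC r - rC s) = `|r - s|.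
Proof. by rewrite rCB cabs_rC. Qed.

Lemma cabs0 : cabs 0 = 0 :> R.
Proof. by rewrite -[0 : R[i]]/(rC 0) cabs_rC normr0. Qed.

Lemma cabs1 : cabs 1 = 1 :> R.
Proof. by rewrite -[1 : R[i]]/(rC 1) cabs_rC normr1. Qed.

Lemma cabsM z w : cabs (z * w) = cabs z * cabs w.
Proof. by apply: complexI; rewrite rmorphM /= !cabsE normrM. Qed.

Lemma ler_cabsD z w : cabs (z + w) <= cabs z + cabs w.
Proof. by rewrite -lecR rmorphD /= !cabsE ler_normD. Qed.

Lemma ler_cabs_sum I (r : seq I) (P : pred I) (F : I -> R[i]) :
  cabs (\sum_(i <- r | P i) F i) <= \sum_(i <- r | P i) cabs (F i).
Proof.
elim/big_rec2: _ => [|i s t _ IH]; first by rewrite cabs0.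
by apply: le_trans (ler_cabsD _ _) _; rewrite lerD2l.
Qed.

End ComplexModulus.

Section OperatorNorm.
Variables (R : realType) (k : nat).
Implicit Types (u : 'cV[R[i]]_k) (B : 'M[R[i]]_k).

Lemma vnormZ c u : vnorm (c *: u) = cabs c * vnorm u.
Proof.
rewrite /vnorm; under eq_bigr => i _ do rewrite mxE cabsM exprMn.
by rewrite -mulr_sumr sqrtrM ?sqr_ge0 // sqrtr_sqr ger0_norm ?cabs_ge0.
Qed.

Lemma vnorm0 : vnorm (0 : 'cV[R[i]]_k) = 0.
Proof. by rewrite -(scale0r (0 : 'cV[R[i]]_k)) vnormZ cabs0 mul0r. Qed.

Lemma vnorm_delta i : vnorm (delta_mx i 0 : 'cV[R[i]]_k) = 1.
Proof.
rewrite /vnorm (bigD1 i) //= big1 ?addr0; first by rewrite mxE !eqxx cabs1 expr1n sqrtr1.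
by move=> j /negbTE ji; rewrite mxE ji cabs0 expr0n.
Qed.

Lemma cabs_coord_le_vnorm u i : cabs (u i 0) <= vnorm u.
Proof.
rewrite /vnorm -(ger0_norm (cabs_ge0 (u i 0))) -sqrtr_sqr ler_sqrt; last first.
  by apply: sumr_ge0 => j _; exact: sqr_ge0.
by rewrite (bigD1 i) //= lerDl; apply: sumr_ge0 => j _; exact: sqr_ge0.
Qed.

Lemma vnorm_le_sum u : vnorm u <= \sum_i cabs (u i 0).
Proof.
rewrite /vnorm -(ger0_norm (sumr_ge0 _ (fun i _ => cabs_ge0 (u i 0)))).
by rewrite -sqrtr_sqr ler_sqrt ?sqr_ge0 // sum_sqr_le_sqr_sum // => i; exact: cabs_ge0.
Qed.

Lemma opnorm_has_ubound B :
  has_ubound [set r | exists u, vnorm u <= 1 /\ r = vnorm (B *m u)].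
Proof.
exists (\sum_i \sum_j cabs (B i j)) => _ [u [u_le1 ->]] /=.
apply: le_trans (vnorm_le_sum _) _; apply: ler_sum => i _.
rewrite mxE; apply: le_trans (ler_cabs_sum _ _ _) _; apply: ler_sum => j _.
rewrite cabsM ler_piMr ?cabs_ge0 //.
exact: le_trans (cabs_coord_le_vnorm _ _) u_le1.
Qed.

Lemma vnorm_mul_le_opnorm B u : vnorm u <= 1 -> vnorm (B *m u) <= opnorm B.
Proof. by move=> u_le1; apply: ub_le_sup; [exact: opnorm_has_ubound | exists u]. Qed.

Lemma opnorm_le B K :
  (forall u, vnorm u <= 1 -> vnorm (B *m u) <= K) -> opnorm B <= K.
Proof.
move=> hK; apply: ge_sup; last by move=> _ [u [u_le1 ->]]; exact: hK.
by exists (vnorm (B *m 0)), 0; rewrite vnorm0 ler01.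
Qed.

Lemma cabs_diag_le_opnorm B i : cabs (B i i) <= opnorm B.
Proof.
have := vnorm_mul_le_opnorm B (_ : vnorm (delta_mx i 0) <= 1).
rewrite vnorm_delta lexx -colE => /(_ isT); apply: le_trans.
by have := cabs_coord_le_vnorm (col i B) i; rewrite mxE.
Qed.

Lemma cabs_trace_le B : cabs (\tr B) <= k%:R * opnorm B.
Proof.
apply: le_trans (ler_cabs_sum _ _ _) _.
apply: le_trans (ler_sum _ (fun i _ => cabs_diag_le_opnorm B i)) _.
by rewrite sumr_const card_ord mulr_natl.
Qed.

Lemma opnorm_scalar_le c : opnorm (c%:M : 'M[R[i]]_k) <= cabs c.
Proof.
apply: opnorm_le => u u_le1; rewrite mul_scalar_mx vnormZ.
by rewrite ler_piMr ?cabs_ge0.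
Qed.

End OperatorNorm.

Section BlockAlgebra.
Variables (R : realType) (n : nat) (m : 'I_n.+1 -> nat).
Local Notation A := (alg R m).
Implicit Types (a b : A) (c : R[i]).

Definition alg_scalar c : A := alg_scale c (alg_one R m).

Lemma alg_scalarE c k : alg_scalar c k = c%:M.
Proof. by rewrite /alg_scalar /alg_scale /alg_one scale_scalar_mx mulr1. Qed.

Lemma alg_one_scalar : alg_one R m = alg_scalar 1.
Proof. by apply: functional_extensionality_dep => k; rewrite alg_scalarE. Qed.

Lemma alg_add_scalar c c' : alg_add (alg_scalar c) (alg_scalar c') = alg_scalar (c + c').
Proof. by apply: functional_extensionality_dep => k; rewrite /alg_add !alg_scalarE raddfD. Qed.

Lemma alg_sub_scalar c c' : alg_sub (alg_scalar c) (alg_scalar c') = alg_scalar (c - c').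
Proof. by apply: functional_extensionality_dep => k; rewrite /alg_sub !alg_scalarE raddfB. Qed.

Lemma alg_mul_scalar c c' : alg_mul (alg_scalar c) (alg_scalar c') = alg_scalar (c * c').
Proof.
apply: functional_extensionality_dep => k.
by rewrite /alg_mul !alg_scalarE mul_scalar_mx scale_scalar_mx.
Qed.

Lemma alg_adj_scalar_real (r : R) : alg_adj (alg_scalar (rC r)) = alg_scalar (rC r).
Proof.
apply: functional_extensionality_dep => k; rewrite /alg_adj !alg_scalarE.
have -> : map_mx conjc ((rC r)%:M : 'M_(m k)) = (conjc (rC r))%:M.
  exact: (map_scalar_mx conjc).
by rewrite tr_scalar_mx rCE conjc_real.
Qed.

Lemma alg_subrr a : alg_sub a a = alg_scalar 0.
Proof. by apply: functional_extensionality_dep => k; rewrite /alg_sub subrr alg_scalarE raddf0. Qed.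

Lemma opnorm_le_alg_norm a k : opnorm (a k) <= alg_norm a.
Proof. exact: (le_bigmax _ (fun k => opnorm (a k))). Qed.

Lemma alg_norm_scalar_le c : alg_norm (alg_scalar c) <= cabs c.
Proof.
apply: bigmax_le => [|k _]; first exact: cabs_ge0.
by rewrite alg_scalarE; exact: opnorm_scalar_le.
Qed.

Lemma norm_alg_one_le (nn : A -> R) (M : R) : 0 < M ->
  (forall a, M * nn a <= alg_norm a) -> nn (alg_one R m) <= M^-1.
Proof.
move=> M_gt0 hM; rewrite -[M^-1]mulr1 ler_pdivlMl //.
apply: le_trans (hM _) _; rewrite alg_one_scalar.
by apply: le_trans (alg_norm_scalar_le _) _; rewrite cabs1.
Qed.

Lemma nn_alg_scalar (nn : A -> R) (r : R) :
  is_alg_norm nn -> nn (alg_scalar (rC r)) = `|r| * nn (alg_one R m).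
Proof. by case=> _ _ ->. Qed.

Lemma trv_sub (v : 'I_n.+1 -> R) a b : trv v (alg_sub a b) = trv v a - trv v b.
Proof. by rewrite /trv -sumrB; apply: eq_bigr => k _; rewrite /alg_sub raddfB mulrBr. Qed.

Section TracialState.
Variable v : 'I_n.+1 -> R.
Hypotheses (m_gt0 : forall k, (0 < m k)%N) (v_ge0 : forall k, 0 <= v k)
  (v_sum1 : \sum_k v k = 1).

Lemma trv_scalar c : trv v (alg_scalar c) = c.
Proof.
have term k : rC (v k / (m k)%:R) * \tr (alg_scalar c k) = rC (v k) * c.
  rewrite alg_scalarE mxtrace_scalar mulrnAr -mulrnAl !rCE -rmorphMn /=.
  by rewrite -mulr_natr divfK // pnatr_eq0 -lt0n.
rewrite /trv; under eq_bigr => k _ do rewrite term rCE.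
by rewrite -mulr_suml -rmorph_sum /= v_sum1 mul1r.
Qed.

Lemma cabs_trv_le a : cabs (trv v a) <= alg_norm a.
Proof.
apply: le_trans (ler_cabs_sum _ _ _) _.
apply: le_trans (_ : \sum_k v k * alg_norm a <= _); last by rewrite -mulr_suml v_sum1 mul1r.
apply: ler_sum => k _; rewrite cabsM cabs_rC ger0_norm ?divr_ge0 //.
apply: le_trans (ler_wpM2l (divr_ge0 (v_ge0 k) (ler0n _ _)) (cabs_trace_le (a k))) _.
rewrite mulrA divfK ?pnatr_eq0 -?lt0n //.
by rewrite ler_wpM2l // opnorm_le_alg_norm.
Qed.

End TracialState.
End BlockAlgebra.

Section Metric.
Variables (R : realType) (X : Type) (d : X -> X -> R).
Hypothesis hd : is_metric d.
Implicit Types (x y z w : X) (g : X -> R).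

Lemma d_ge0 x y : 0 <= d x y. Proof. by case: hd. Qed.
Lemma d_sym x y : d x y = d y x. Proof. by case: hd. Qed.
Lemma d_tri x y z : d x z <= d x y + d y z. Proof. by case: hd. Qed.
Lemma d_xx x : d x x = 0. Proof. by case: hd => _ /(_ x x) [_ ->]. Qed.

Lemma d_gt0 x y : x <> y -> 0 < d x y.
Proof.
move=> xy; rewrite lt_def d_ge0 andbT; apply/eqP => dxy.
by apply: xy; case: hd => _ /(_ x y) [/(_ dxy)].
Qed.

Lemma scaled_dist_lipschitz (c : R) x z w : 0 <= c ->
  `|c * d x z - c * d x w| <= c * d z w.
Proof.
move=> c_ge0; rewrite -mulrBr normrM ger0_norm // ler_wpM2l //.
have := d_tri x z w; have := d_tri x w z; rewrite (d_sym w z) => h1 h2.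
by rewrite ler_norml; apply/andP; split; lra.
Qed.

Lemma metric_compact_bounded : metric_compact d -> exists B, forall x y, d x y <= B.
Proof.
move=> hc; pose U x0 y := d x0 y < 1.
have U_open x0 : metric_open d (U x0).
  move=> y Uy; exists (1 - d x0 y); first by rewrite subr_gt0.
  by move=> z dyz; apply: le_lt_trans (d_tri x0 y z) _; rewrite -ltrBrDl.
have [k [f cover]] : exists k (f : 'I_k -> X), forall x, exists j, U (f j) x.
  by apply: (hc X U) => // x; exists x; rewrite /U d_xx ltr01.
exists (2 + \sum_i \sum_j d (f i) (f j)) => x y.
have [i /ltW xi] := cover x; have [j /ltW yj] := cover y; rewrite d_sym in xi.
have fij : d (f i) (f j) <= \sum_i \sum_j d (f i) (f j).
  apply: le_trans (_ : \sum_j d (f i) (f j) <= _).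
    by rewrite (bigD1 j) //= lerDl; apply: sumr_ge0 => l _; exact: d_ge0.
  rewrite [leRHS](bigD1 i) //= lerDl.
  by apply: sumr_ge0 => l _; apply: sumr_ge0 => l' _; exact: d_ge0.
have := d_tri x (f i) y; have := d_tri (f i) (f j) y; lra.
Qed.

Lemma le_diam x y : metric_compact d -> d x y <= diam d.
Proof.
move=> /metric_compact_bounded [B dB]; apply: ub_le_sup; last by exists x, y.
by exists B => _ [z [w ->]].
Qed.

Lemma diam_ge0 x : metric_compact d -> 0 <= diam d.
Proof. by move=> hc; rewrite -(d_xx x); exact: le_diam. Qed.

Definition rcont g : Prop := forall x (e : R), 0 < e ->
  exists2 del : R, 0 < del & forall y, d x y < del -> `|g x - g y| < e.

Lemma rcontB (B : R) g : rcont g -> rcont (fun z => B - g z).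
Proof.
move=> g_cont x e /(g_cont x) [del del_gt0 near]; exists del => // y /near.
by apply: le_lt_trans; rewrite opprB addrC addrA subrK distrC.
Qed.

Lemma rcont_sqrt g : rcont g -> (forall z, 0 <= g z) -> rcont (Num.sqrt \o g).
Proof.
move=> g_cont g_ge0 x e e_gt0.
have [del del_gt0 near] := g_cont x (e ^+ 2) (exprn_gt0 2 e_gt0).
exists del => // y /near dg; apply: le_lt_trans (dist_sqrtr_le (g_ge0 x) (g_ge0 y)) _.
have -> : e = Num.sqrt (e ^+ 2) by rewrite sqrtr_sqr ger0_norm ?ltW.
by rewrite ltr_sqrt ?exprn_gt0.
Qed.

Lemma lipschitz_rcont g (K : R) : 0 <= K ->
  (forall z w, `|g z - g w| <= K * d z w) -> rcont g.
Proof.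
move=> K_ge0 g_lip x e e_gt0; exists (e / (K + 1)); first by rewrite divr_gt0 ?ltr_wpDl.
move=> y dxy; apply: le_lt_trans (g_lip x y) _.
apply: le_lt_trans (_ : (K + 1) * d x y < _); first by rewrite ler_wpM2r ?d_ge0 ?lerDl.
by rewrite mulrC -ltr_pdivlMr // ltr_wpDl.
Qed.

Lemma rcont_scaled_dist x (c : R) : 0 <= c -> rcont (fun z => c * d x z).
Proof. by move=> c_ge0; apply: (lipschitz_rcont c_ge0) => z w; exact: scaled_dist_lipschitz. Qed.

End Metric.

Section ScalarFunctions.
Variables (R : realType) (X : Type) (d : X -> X -> R) (n : nat) (m : 'I_n.+1 -> nat).
Hypothesis hd : is_metric d.
Local Notation A := (alg R m).
Implicit Types (g : X -> R) (a : X -> A).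

Definition scalar_fun g : X -> A := fun z => alg_scalar m (rC (g z)).

Definition scaled_dist (x : X) (c : R) : X -> A := scalar_fun (fun z => c * d x z).

Lemma cont_cst (b : A) : cont d (fun _ : X => b).
Proof.
move=> x e e_gt0; exists 1 => // y _; rewrite alg_subrr.
by apply: le_lt_trans (alg_norm_scalar_le m _) _; rewrite cabs0.
Qed.

Lemma cont_scalar_fun g : rcont d g -> cont d (scalar_fun g).
Proof.
move=> g_cont x e /(g_cont x) [del del_gt0 near]; exists del => // y /near.
by apply: le_lt_trans; rewrite alg_sub_scalar -cabs_rCB; exact: alg_norm_scalar_le.
Qed.

Lemma cont_scaled_dist x c : 0 <= c -> cont d (scaled_dist x c).
Proof. by move=> c_ge0; apply/cont_scalar_fun/rcont_scaled_dist. Qed.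

Lemma supnorm_le a (K : R) : (forall z, alg_norm (a z) <= K) -> (supnorm a <= K%:E)%E.
Proof. by move=> aK; apply: ge_ereal_sup => _ [z ->]; rewrite lee_fin. Qed.

Lemma lipc_le1P (nn : A -> R) a :
  (lipc d nn a <= 1)%E <-> forall x y, x <> y -> nn (alg_sub (a x) (a y)) <= d x y.
Proof.
split=> [lip x y xy | lip].
  have : ((nn (alg_sub (a x) (a y)) / d x y)%:E <= 1)%E.
    by apply: le_trans lip; apply: ereal_sup_ubound; exists x, y.
  by rewrite lee_fin ler_pdivrMr ?d_gt0 // mul1r.
apply: ge_ereal_sup => _ [x [y [xy ->]]].
by rewrite lee_fin ler_pdivrMr ?d_gt0 // mul1r lip.
Qed.

Lemma lipc_scalar_fun_le1 (nn : A -> R) (M : R) g :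
  is_alg_norm nn -> 0 < M -> (forall b, M * nn b <= alg_norm b) ->
  (forall z w, `|g z - g w| <= M * d z w) -> (lipc d nn (scalar_fun g) <= 1)%E.
Proof.
move=> hnn M_gt0 hM g_lip; apply/lipc_le1P => z w _.
rewrite alg_sub_scalar rCB nn_alg_scalar //.
apply: le_trans (ler_wpM2l (normr_ge0 _) (norm_alg_one_le M_gt0 hM)) _.
by rewrite ler_pdivrMr // mulrC g_lip.
Qed.

Section States.
Variable mu : (X -> A) -> R[i].
Hypothesis hmu : is_state d mu.

Lemma state_scalar_fun_ge0 g : rcont d g -> (forall z, 0 <= g z) ->
  0 <= mu (scalar_fun g).
Proof.
move=> g_cont g_ge0; case: hmu => _ _ mu_pos _.
pose h := scalar_fun (Num.sqrt \o g).
have -> : scalar_fun g = fun z => alg_mul (alg_adj (h z)) (h z).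
  apply: funext => z; rewrite /h /scalar_fun alg_adj_scalar_real alg_mul_scalar.
  by rewrite !rCE -rmorphM /= -expr2 sqr_sqrtr.
by apply/mu_pos/cont_scalar_fun; exact: rcont_sqrt.
Qed.

Lemma state_scalar_funB (B : R) g : rcont d g ->
  mu (scalar_fun (fun z => B - g z)) = rC B - mu (scalar_fun g).
Proof.
move=> g_cont; case: hmu => mu_add mu_scale _ mu_one.
have := mu_add _ _ (cont_scalar_fun (rcontB B g_cont)) (cont_scalar_fun g_cont).
have -> : (fun z => alg_add (scalar_fun (fun z => B - g z) z) (scalar_fun g z)) =
          (fun _ => alg_scale (rC B) (alg_one R m)).
  by apply: funext => z; rewrite /scalar_fun alg_add_scalar !rCE -rmorphD /= subrK.
rewrite mu_scale; last exact: cont_cst.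
by rewrite mu_one mulr1 => ->; rewrite addrK.
Qed.

Lemma state_scalar_fun_range g (B : R) : rcont d g -> (forall z, 0 <= g z <= B) ->
  exists2 t, mu (scalar_fun g) = rC t & 0 <= t <= B.
Proof.
move=> g_cont g_range.
have g_ge0 z : 0 <= g z by case/andP: (g_range z).
have Bg_ge0 z : 0 <= B - g z by case/andP: (g_range z); rewrite subr_ge0.
have := state_scalar_fun_ge0 (rcontB B g_cont) Bg_ge0.
rewrite state_scalar_funB // subr_ge0.
move: (state_scalar_fun_ge0 g_cont g_ge0).
(* the order of R[i] only compares complex numbers with equal imaginary parts *)
case: (mu (scalar_fun g)) => t s; rewrite !lecE /= => /andP [/eqP -> t_ge0] /andP [_ t_leB].
by exists t; rewrite ?t_ge0.
Qed.

End States.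
End ScalarFunctions.

Arguments scaled_dist {R X} d {n m} x c.

Section MongeKantorovich.
Variables (R : realType) (X : Type) (d : X -> X -> R) (n : nat) (m : 'I_n.+1 -> nat).
Variables (nn : alg R m -> R) (phi : alg R m -> R[i]) (x y : X).
Hypothesis hd : is_metric d.

Lemma mk_Delta_le L (N : R) : 0 <= N -> (forall a, alg_norm a <= N * nn a) ->
  (forall a b, phi (alg_sub a b) = phi a - phi b) ->
  (forall a, cabs (phi a) <= alg_norm a) ->
  (forall a, (lipc d nn a <= L a)%E) ->
  (mk d L (Delta phi x) (Delta phi y) <= (N * d x y)%:E)%E.
Proof.
move=> N_ge0 hN phiB phi_le lipc_le; apply: ge_ereal_sup => _ [a [_ _ La ->]].
rewrite lee_fin /Delta; have [<-|xy] := pselect (x = y).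
  by rewrite subrr cabs0 d_xx // mulr0.
have /(lipc_le1P hd) a_lip := le_trans (lipc_le a) La.
rewrite -phiB; apply: le_trans (phi_le _) _; apply: le_trans (hN _) _.
by rewrite ler_wpM2l // a_lip.
Qed.

Lemma mk_Delta_ge L (c : R) : (forall c, phi (alg_scalar m c) = c) -> 0 <= c ->
  (L (scaled_dist d x c) <= 1)%E ->
  ((c * d x y)%:E <= mk d L (Delta phi x) (Delta phi y))%E.
Proof.
move=> phi_scalar c_ge0 Lc; apply: ereal_sup_ubound; exists (scaled_dist d x c); split => //.
- exact: cont_scaled_dist.
- by move=> z; rewrite alg_adj_scalar_real.
rewrite /Delta /scaled_dist /scalar_fun !phi_scalar cabs_rCB d_xx // mulr0 sub0r normrN.
by rewrite ger0_norm // mulr_ge0 ?d_ge0.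
Qed.

End MongeKantorovich.

Section TestFunction.
Variables (R : realType) (X : Type) (d : X -> X -> R) (n : nat) (m : 'I_n.+1 -> nat).
Variables (nn : alg R m -> R) (M c : R) (x : X).
Hypotheses (hd : is_metric d) (hnn : is_alg_norm nn) (M_gt0 : 0 < M).
Hypotheses (hM : forall a, M * nn a <= alg_norm a) (c_range : 0 <= c <= M).
Local Notation f := (@scaled_dist R X d n m x c).

Lemma lipc_scaled_dist_le1 : (lipc d nn f <= 1)%E.
Proof.
case/andP: c_range => c_ge0 c_leM.
apply: (lipc_scalar_fun_le1 hd hnn M_gt0 hM) => z w.
apply: le_trans (scaled_dist_lipschitz hd _ _ _ c_ge0) _.
by rewrite ler_wpM2r ?d_ge0.
Qed.

Lemma L_CX_scaled_dist_le1 : (L_CX d nn f <= 1)%E.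
Proof.
rewrite /L_CX ge_max lipc_scaled_dist_le1 /=.
apply: le_trans (ereal_inf_lbound _) _.
  exists f; split => //; first by apply: cont_scaled_dist => //; case/andP: c_range.
  by move=> z; exists (rC (c * d x z)).
apply: supnorm_le => z; rewrite alg_subrr.
by apply: le_trans (alg_norm_scalar_le m _) _; rewrite cabs0.
Qed.

Hypotheses (hc : metric_compact d) (c_diam : c * diam d <= 1).

Lemma scaled_dist_range z : 0 <= c * d x z <= 1.
Proof.
case/andP: c_range => c_ge0 _; rewrite mulr_ge0 ?d_ge0 //=.
by apply: le_trans c_diam; rewrite ler_wpM2l // le_diam.
Qed.

Lemma L_C_scaled_dist_le1 : (L_C d nn f <= 1)%E.
Proof.
rewrite /L_C ge_max lipc_scaled_dist_le1 /=.
apply: le_trans (ereal_inf_lbound _) _; first by exists (rC 0).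
apply: supnorm_le => z; rewrite alg_sub_scalar.
apply: le_trans (alg_norm_scalar_le m _) _; rewrite cabs_rCB subr0.
by case/andP: (scaled_dist_range z) => ge0 le1; rewrite ger0_norm.
Qed.

Lemma L_mu_scaled_dist_le1 mu : is_state d mu -> (L_mu d mu nn f <= 1)%E.
Proof.
move=> hmu; rewrite /L_mu ge_max lipc_scaled_dist_le1 /=.
have c_ge0 : 0 <= c by case/andP: c_range.
have [t -> t_range] :=
  state_scalar_fun_range hmu (rcont_scaled_dist hd x c_ge0) scaled_dist_range.
apply: supnorm_le => z; rewrite alg_sub_scalar.
apply: le_trans (alg_norm_scalar_le m _) _; rewrite cabs_rCB.
by have := scaled_dist_range z; move: t_range; rewrite ler_norml; lra.
Qed.

End TestFunction.

Section TracialStateBounds.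
Variables (R : realType) (X : Type) (d : X -> X -> R) (n : nat) (m : 'I_n.+1 -> nat).
Variables (nn : alg R m -> R) (N : R) (v : 'I_n.+1 -> R) (x y : X).
Hypotheses (hd : is_metric d) (m_gt0 : forall k, (0 < m k)%N).
Hypotheses (v_ge0 : forall k, 0 <= v k) (v_sum1 : \sum_k v k = 1).
Hypotheses (N_ge0 : 0 <= N) (hN : forall a, alg_norm a <= N * nn a).

Lemma mk_Delta_trv_bounds L c : 0 <= c -> (forall a, (lipc d nn a <= L a)%E) ->
  (L (scaled_dist d x c) <= 1)%E ->
  ((c * d x y)%:E <= mk d L (Delta (trv v) x) (Delta (trv v) y) <= (N * d x y)%:E)%E.
Proof.
move=> c_ge0 lipL Lc; apply/andP; split.
  by apply: mk_Delta_ge => //; exact: trv_scalar.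
by apply: mk_Delta_le => //; [exact: trv_sub | exact: cabs_trv_le].
Qed.

End TracialStateBounds.

Arguments mk_Delta_trv_bounds {R X d n m nn N v} x y.

Lemma inv_le_of_lt_mul (R : realFieldType) (M E : R) :
  0 < M -> 1 < M * E -> 0 <= E^-1 <= M /\ E^-1 * E = 1.
Proof.
move=> M_gt0 ME; have E_gt0 : 0 < E by rewrite -(pmulr_rgt0 _ M_gt0) (lt_trans ltr01).
by rewrite invr_ge0 ltW //= mulVf ?gt_eqF // -[E^-1]mul1r ler_pdivrMr // ltW.
Qed.

Theorem theorem3p7 (R : realType) (X : Type) (d : X -> X -> R)
  (n : nat) (m : 'I_n.+1 -> nat) (nn : alg R m -> R) (M N : R)
  (v : 'I_n.+1 -> R) :
  is_metric d -> metric_compact d ->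
  (forall k, (0 < m k)%N) ->
  is_alg_norm nn -> 0 < M -> 0 < N ->
  (forall a, M * nn a <= alg_norm a /\ alg_norm a <= N * nn a) ->
  (forall k, 0 <= v k <= 1) -> \sum_k v k = 1 ->
  forall x y : X,
  let D := diam d in
  let Dx := Delta (trv v) x in
  let Dy := Delta (trv v) y in
  (* (1) q = C(X) *)
  ((M * d x y)%:E <= mk d (L_CX d nn) Dx Dy <= (N * d x y)%:E)%E /\
  (* (2) q = C *)
  (M * D <= 1 ->
     ((M * d x y)%:E <= mk d (L_C d nn) Dx Dy <= (N * d x y)%:E)%E) /\
  (1 < M * D ->
     ((d x y / D)%:E <= mk d (L_C d nn) Dx Dy <= (N * d x y)%:E)%E) /\
  (* (3) q = mu, a state of C(X,A) *)
  (forall mu : (X -> alg R m) -> R[i], is_state d mu ->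
     (2 * M * D <= 1 ->
        ((M * d x y)%:E <= mk d (L_mu d mu nn) Dx Dy <= (N * d x y)%:E)%E) /\
     (1 < 2 * M * D ->
        ((d x y / (2 * D))%:E <= mk d (L_mu d mu nn) Dx Dy <= (N * d x y)%:E)%E)).
Proof.
move=> hd hc m_gt0 hnn M_gt0 N_gt0 hMN hv hv1 x y D Dx Dy.
have v_ge0 k : 0 <= v k by case/andP: (hv k).
have hM a : M * nn a <= alg_norm a by case: (hMN a).
have hN a : alg_norm a <= N * nn a by case: (hMN a).
have bounds := mk_Delta_trv_bounds x y hd m_gt0 v_ge0 hv1 (ltW N_gt0) hN.
have lip_CX a : (lipc d nn a <= L_CX d nn a)%E by rewrite le_max lexx.
have lip_C a : (lipc d nn a <= L_C d nn a)%E by rewrite le_max lexx.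
have lip_mu mu a : (lipc d nn a <= L_mu d mu nn a)%E by rewrite le_max lexx.
have M_range : 0 <= M <= M by rewrite lexx andbT ltW.
have MD_ge0 : 0 <= M * D := mulr_ge0 (ltW M_gt0) (diam_ge0 hd x hc).
split; [|split; [|split]].
- apply: bounds (ltW M_gt0) _ _ => //.
  exact: (L_CX_scaled_dist_le1 x hd hnn M_gt0 hM M_range).
- move=> MD; apply: bounds (ltW M_gt0) _ _ => //.
  exact: (L_C_scaled_dist_le1 x hd hnn M_gt0 hM M_range hc MD).
- move=> /(inv_le_of_lt_mul M_gt0) [D_range DD]; rewrite mulrC.
  apply: bounds => //; first by case/andP: D_range.
  by apply: (L_C_scaled_dist_le1 x hd hnn M_gt0 hM D_range hc); rewrite DD.
move=> mu hmu; split => [MD | ].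
- apply: bounds (ltW M_gt0) _ _ => //.
  apply: (L_mu_scaled_dist_le1 x hd hnn M_gt0 hM M_range hc) hmu.
  by rewrite -/D; rewrite -mulrA in MD; lra.
- rewrite -mulrA mulrCA => /(inv_le_of_lt_mul M_gt0) [D_range DD]; rewrite mulrC.
  apply: bounds => //; first by case/andP: D_range.
  apply: (L_mu_scaled_dist_le1 x hd hnn M_gt0 hM D_range hc) hmu.
  by rewrite -/D; rewrite mulrCA in DD; lra.
Qed.
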